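(* Let points $0,1,2,3$ of $\mathbb{P}^3(\mathbb{C})$ be represented by the standard basis vectors $e_0,e_1,e_2,e_3$ and points $i=4,\dots,9$ by arbitrary vectors $(x_i,y_i,z_i,w_i)$ (and $(x_i,y_i,z_i,w_i)$ for $i\le 3$ the corresponding standard basis coordinates). Let $N$ be the $10\times10$ matrix whose row $i$ ($i=0,\dots,9$) is $$(x_i^2,\ x_iy_i,\ x_iz_i,\ x_iw_i,\ y_i^2,\ y_iz_i,\ y_iw_i,\ z_i^2,\ z_iw_i,\ w_i^2),$$ let $M$ be the $4\times4$ matrix whose row indexed by $j\in\{6,7,8,9\}$ (in increasing order) is $\big([015j][234j],[012j][345j],[024j][135j],[045j][123j]\big)$, and let $Q=-x_5y_4z_5w_4 + x_4y_5z_5w_4 + x_5y_4z_4w_5 - x_4y_4z_5w_5$. Then $\det M = Q\cdot\det N$.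
   Context: $[abcd]$ denotes the determinant of the $4\times4$ matrix whose columns are the representative vectors of the points $a,b,c,d$. *)

From mathcomp Require Import all_boot all_order all_algebra all_field.
Set Implicit Arguments. Unset Strict Implicit. Unset Printing Implicit Defensive.
Import GRing.Theory.
Local Open Scope ring_scope.

Definition bracket (v : 'I_10 -> 'rV[algC]_4) (a b c d : 'I_10) : algC :=
  \det (\matrix_(r < 4, k < 4)
          (v (match val k with 0 => a | 1 => b | 2 => c | _ => d end)) ord0 r).

Definition cx (v : 'I_10 -> 'rV[algC]_4) i : algC := v i ord0 (inord 0).
Definition cy (v : 'I_10 -> 'rV[algC]_4) i : algC := v i ord0 (inord 1).
Definition cz (v : 'I_10 -> 'rV[algC]_4) i : algC := v i ord0 (inord 2).
Definition cw (v : 'I_10 -> 'rV[algC]_4) i : algC := v i ord0 (inord 3).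

Definition Nmat (v : 'I_10 -> 'rV[algC]_4) : 'M[algC]_10 :=
  \matrix_(i < 10, k < 10)
    (let x := cx v i in let y := cy v i in let z := cz v i in let w := cw v i in
     match val k with
     | 0 => x * x | 1 => x * y | 2 => x * z | 3 => x * w
     | 4 => y * y | 5 => y * z | 6 => y * w
     | 7 => z * z | 8 => z * w | _ => w * w end).

Definition p (n : nat) : 'I_10 := inord n.

Definition Mmat (v : 'I_10 -> 'rV[algC]_4) : 'M[algC]_4 :=
  \matrix_(r < 4, k < 4)
    (let j := p (6 + val r) in
     match val k with
     | 0 => bracket v (p 0) (p 1) (p 5) j * bracket v (p 2) (p 3) (p 4) j
     | 1 => bracket v (p 0) (p 1) (p 2) j * bracket v (p 3) (p 4) (p 5) j
     | 2 => bracket v (p 0) (p 2) (p 4) j * bracket v (p 1) (p 3) (p 5) j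
     | _ => bracket v (p 0) (p 4) (p 5) j * bracket v (p 1) (p 2) (p 3) j end).

Definition Qpoly (v : 'I_10 -> 'rV[algC]_4) : algC :=
  let x := cx v in let y := cy v in let z := cz v in let w := cw v in
  - (x (p 5) * y (p 4) * z (p 5) * w (p 4)) + x (p 4) * y (p 5) * z (p 5) * w (p 4)
  + x (p 5) * y (p 4) * z (p 4) * w (p 5) - x (p 4) * y (p 4) * z (p 5) * w (p 5).

(* Both sides are polynomials in the coordinates of the points 4, ..., 9, so
   the identity is checked by expanding both determinants along their first
   rows and normalising with [ring].  The expansion stays small because entries
   that vanish by the normalisation of the points 0, ..., 3 are kept as
   structural zeros ([None]) and their cofactors are never expanded: the four
   standard basis rows of N reduce det N to the 6 x 6 minor of the mixed
   monomials, and each bracket reduces to a minor of order at most 3. *)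
From mathcomp Require Import all_boot all_order all_algebra all_field.
From mathcomp Require Import ring.
Set Implicit Arguments. Unset Strict Implicit. Unset Printing Implicit Defensive.
Import GRing.Theory.
Local Open Scope ring_scope.

Section LaplaceExpansion.
Variable R : comNzRingType.

(* [sum_upto] and [bumpb] restate [\sum] and [bump] in forms that [cbv]
   evaluates: big operators are locked and [leq] is computed through [subn]. *)
Fixpoint sum_upto (m : nat) (g : nat -> R) : R :=
  if m is m'.+1 then sum_upto m' g + g m' else 0.

Definition bumpb (h i : nat) : nat := if Nat.leb h i then i.+1 else i.

Definition sign_odd (j : nat) (a : R) : R := if odd j then - a else a.

Fixpoint det_expand (n : nat) (f : nat -> nat -> option R) : R :=
  if n is n'.+1 then
    sum_upto n (fun j => if f 0%N j is Some a
                         then sign_odd j a * det_expand n' (fun i k => f i.+1 (bumpb j k))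
                         else 0)
  else 1.

Lemma sum_uptoE m g : sum_upto m g = \sum_(j < m) g j.
Proof. by elim: m => [|m IHm] /=; rewrite ?big_ord0 // big_ord_recr IHm. Qed.

Lemma bumpbE h i : bumpb h i = bump h i.
Proof.
rewrite /bumpb /bump; case: PeanoNat.Nat.leb_spec => [/leP -> | /ltP].
  by rewrite add1n.
by rewrite ltnNge => /negbTE ->.
Qed.

Lemma det_expandE n (f : nat -> nat -> option R) (A : 'M[R]_n) :
  (forall i j : 'I_n, A i j = odflt 0 (f i j)) -> \det A = det_expand n f.
Proof.
elim: n f A => [|n IHn] f A eqA; first by rewrite det_mx00.
rewrite (expand_det_row A ord0); cbn [det_expand]; rewrite sum_uptoE.
apply: eq_bigr => j _.
rewrite eqA /=; case: (f 0%N j) => [a|] /=; last by rewrite mul0r.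
rewrite /cofactor /sign_odd /= add0n -signr_odd.
rewrite (IHn (fun i k => f i.+1 (bumpb j k))); last first.
  by move=> i k; rewrite !mxE eqA /= bumpbE.
by case: (odd j); rewrite ?expr0 ?expr1 ?mul1r ?mulN1r ?mulNr ?mulrN.
Qed.

Definition omul (a b : option R) : option R :=
  if (a, b) is (Some x, Some y) then Some (x * y) else None.

Lemma odflt_omul a b : odflt 0 (omul a b) = odflt 0 a * odflt 0 b.
Proof. by case: a => [a|]; case: b => [b|] //=; rewrite ?mul0r ?mulr0. Qed.

End LaplaceExpansion.

Section NormalisedPoints.
Variable v : 'I_10 -> 'rV[algC]_4.

Definition ocoord (i r : nat) : option algC :=
  if Nat.ltb i 4 then (if Nat.eqb i r then Some 1 else None)
  else Some (v (p i) ord0 (inord r)).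

Definition Nentry (i k : nat) : option algC :=
  let x := ocoord i 0 in let y := ocoord i 1 in
  let z := ocoord i 2 in let w := ocoord i 3 in
  match k with
  | 0 => omul x x | 1 => omul x y | 2 => omul x z | 3 => omul x w
  | 4 => omul y y | 5 => omul y z | 6 => omul y w
  | 7 => omul z z | 8 => omul z w | _ => omul w w end.

Definition bracket_expand (a b c d : nat) : algC :=
  det_expand 4 (fun r k => ocoord (match k with 0 => a | 1 => b | 2 => c | _ => d end) r).

Definition Mentry (r k : nat) : option algC :=
  let j := Nat.add 6 r in
  Some (match k with
        | 0 => bracket_expand 0 1 5 j * bracket_expand 2 3 4 j
        | 1 => bracket_expand 0 1 2 j * bracket_expand 3 4 5 j
        | 2 => bracket_expand 0 2 4 j * bracket_expand 1 3 5 j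
        | _ => bracket_expand 0 4 5 j * bracket_expand 1 2 3 j end).

Hypothesis hstd : forall (i : 'I_10) (k : 'I_4), (val i < 4)%N ->
  v i ord0 k = (val i == val k)%:R.

Lemma ocoordE (i : 'I_10) (r : 'I_4) : v i ord0 r = odflt 0 (ocoord i r).
Proof.
rewrite /ocoord; case: PeanoNat.Nat.ltb_spec => [/ltP i_lt4 | _].
  by rewrite hstd //; case: PeanoNat.Nat.eqb_spec; case: eqP.
by rewrite /p !inord_val.
Qed.

Lemma ocoord_inord (i : 'I_10) (r : nat) : (r < 4)%N ->
  v i ord0 (inord r) = odflt 0 (ocoord i r).
Proof. by move=> r_lt4; rewrite ocoordE inordK. Qed.

Lemma Nmat_entry (i k : 'I_10) : Nmat v i k = odflt 0 (Nentry i k).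
Proof.
rewrite mxE /Nentry /cx /cy /cz /cw !ocoord_inord //.
by case: k => [[|[|[|[|[|[|[|[|[|[|k]]]]]]]]]] ?] //=; rewrite odflt_omul.
Qed.

Lemma bracketE (a b c d : nat) :
  (a < 10)%N -> (b < 10)%N -> (c < 10)%N -> (d < 10)%N ->
  bracket v (p a) (p b) (p c) (p d) = bracket_expand a b c d.
Proof.
move=> a_lt b_lt c_lt d_lt; apply: det_expandE => r k.
by rewrite mxE ocoordE; case: k => [[|[|[|[|k]]]] ?] //=; rewrite /p inordK.
Qed.

Lemma Mmat_entry (r k : 'I_4) : Mmat v r k = odflt 0 (Mentry r k).
Proof.
have j_lt10 : (6 + r < 10)%N by case: r => [[|[|[|[|r]]]] ?].
by rewrite mxE /Mentry /= !bracketE.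
Qed.

End NormalisedPoints.

Unset Implicit Arguments.

Theorem mainTheorem7 (v : 'I_10 -> 'rV[algC]_4)
  (hstd : forall (i : 'I_10) (k : 'I_4), (val i < 4)%N ->
            v i ord0 k = (val i == val k)%:R) :
  \det (Mmat v) = Qpoly v * \det (Nmat v).
Proof.
rewrite (det_expandE (Mmat_entry hstd)) (det_expandE (Nmat_entry hstd)).
cbv beta iota zeta delta [det_expand sum_upto bumpb sign_odd Mentry Nentry
  bracket_expand ocoord omul Nat.ltb Nat.leb Nat.eqb Nat.add odd negb].
rewrite /Qpoly /cx /cy /cz /cw.
ring.
Qed.
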